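(* Let $\mathbf H=\mathbf g\mathbf h^T$ with $\mathbf g\in\mathbb C^{M_R}$, $\mathbf h\in\mathbb C^{M_T}$, let $\mathbf\Theta\in\mathbb C^{M_R\times M_T}$ have full rank, and set $\hat{\mathbf H}=\mathbf H\circ\mathbf\Theta$. If $M_R\le M_T$, there exist numbers $\varepsilon_1,\dots,\varepsilon_{M_R}$ with $\min_i|[\mathbf h]_i|^2\le\varepsilon_i\le\max_i|[\mathbf h]_i|^2$ such that $$\det(\hat{\mathbf H}\hat{\mathbf H}^H)=\Big(\prod_{i=1}^{M_R}|[\mathbf g]_i|^2\varepsilon_i\Big)\det(\mathbf\Theta\mathbf\Theta^H).$$ If $M_R\ge M_T$, there exist numbers $\nu_1,\dots,\nu_{M_T}$ with $\min_i|[\mathbf g]_i|^2\le\nu_i\le\max_i|[\mathbf g]_i|^2$ such that $$\det(\hat{\mathbf H}^H\hat{\mathbf H})=\Big(\prod_{i=1}^{M_T}|[\mathbf h]_i|^2\nu_i\Big)\det(\mathbf\Theta^H\mathbf\Theta).$$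
   Context: $\circ$ denotes the Hadamard (entrywise) product; $[\mathbf x]_i$ is the $i$th entry of $\mathbf x$. *)

(* Complex numbers: an arbitrary numClosedFieldType C
   (algebraically closed field with conjugation and norm, e.g. algC; C-like). *)
From HB Require Import structures.
From mathcomp Require Import all_boot all_order all_algebra.
Set Implicit Arguments. Unset Strict Implicit. Unset Printing Implicit Defensive.
Import Order.TTheory GRing.Theory Num.Theory.
Local Open Scope ring_scope.

Definition ctrmx (C : numClosedFieldType) (m n : nat) (A : 'M[C]_(m, n)) : 'M[C]_(n, m) :=
  map_mx Num.conj (A^T).

Definition hadamard (C : numClosedFieldType) (m n : nat) (A B : 'M[C]_(m, n)) : 'M[C]_(m, n) :=
  \matrix_(i, j) (A i j * B i j).

(* min_i x_i <= e <= max_i x_i, for a finite family of (real) values x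
   (over a total order: some x_i is <= e and some x_j is >= e). *)
Definition in_min_max (C : numClosedFieldType) (n : nat) (x : 'I_n -> C) (e : C) : Prop :=
  (exists i, x i <= e) /\ (exists j, e <= x j).

From HB Require Import structures.
From mathcomp Require Import all_boot all_order all_algebra perm.
Import Order.TTheory GRing.Theory Num.Theory.
Local Open Scope ring_scope.
Set Implicit Arguments. Unset Strict Implicit. Unset Printing Implicit Defensive.

(* Writing [D_v] for the diagonal matrix with diagonal [v], the
   Hadamard product with a rank-one matrix is a two-sided diagonal scaling:
   g h^T o Theta = D_g Theta D_h.  Hence
     det (Hh Hh^H) = (prod_i |g_i|^2) det (Theta D_d Theta^H),  d_j = |h_j|^2,
   and the second claim is the first one applied to Theta^H.
   The heart of the matter is a weighted Cauchy-Binet formula: for an n x m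
   matrix X and weights d,
     det (X D_d X^H) = sum_{|S| = n} (prod_{j in S} d_j) det (X D_{1_S} X^H),
   where every coefficient det (X D_{1_S} X^H) = |det X_S|^2 is nonnegative.
   If lo <= d_j <= hi with lo >= 0, this sandwiches det (X D_d X^H) between
   lo^n det (X X^H) and hi^n det (X X^H), so it equals e^n det (X X^H) for
   the n-th root e of the ratio, which lies between lo and hi.  Taking all
   eps_i equal to e proves the theorem. *)

Lemma det_mulmx_ffun (R : comNzRingType) n m (A : 'M[R]_(n, m)) (B : 'M[R]_(m, n)) :
  \det (A *m B) = \sum_(f : {ffun 'I_n -> 'I_m})
     (\prod_i A i (f i)) * \det (\matrix_(i, j) B (f i) j).
Proof.
rewrite /determinant.
under eq_bigr => s _.
  rewrite (eq_bigr (fun i => \sum_(k < m) A i k * B k ((s : 'S_n) i)));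
    last by move=> i _; rewrite mxE.
  rewrite bigA_distr_bigA big_distrr /=.
  over.
rewrite exchange_big /=; apply: eq_bigr => f _.
rewrite big_distrr /=; apply: eq_bigr => s _.
rewrite big_split /= mulrCA; congr (_ * (_ * _)).
by apply: eq_bigr => i _; rewrite mxE.
Qed.

Section ConjugateTranspose.
Variable C : numClosedFieldType.

Lemma ctrmxK m n (A : 'M[C]_(m, n)) : ctrmx (ctrmx A) = A.
Proof. by apply/matrixP => i j; rewrite !mxE conjCK. Qed.

Lemma ctrmx_mul m n p (A : 'M[C]_(m, n)) (B : 'M[C]_(n, p)) :
  ctrmx (A *m B) = ctrmx B *m ctrmx A.
Proof. by rewrite /ctrmx trmx_mul map_mxM. Qed.

Lemma ctrmx_diag n (a : 'I_n -> C) :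
  ctrmx (diag_mx (\row_i a i)) = diag_mx (\row_i Num.conj (a i)).
Proof.
apply/matrixP => i j; rewrite !mxE.
by case: eqVneq => [->|]; rewrite ?mulr1n ?mulr0n ?conjC0.
Qed.

(* The Gram determinant of a square matrix is |det Z|^2, hence nonnegative. *)
Lemma det_gram_square_ge0 n (Z : 'M[C]_n) : 0 <= \det (Z *m ctrmx Z).
Proof.
by rewrite det_mulmx /ctrmx det_map_mx det_tr -normCK exprn_ge0.
Qed.

End ConjugateTranspose.

Definition weighted_gram (C : numClosedFieldType) n m (X : 'M[C]_(n, m))
    (d : 'I_m -> C) : 'M[C]_n :=
  X *m diag_mx (\row_j d j) *m ctrmx X.

Lemma eq_weighted_gram (C : numClosedFieldType) n m (X : 'M[C]_(n, m))
    (d d' : 'I_m -> C) :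
  (forall j, d j = d' j) -> weighted_gram X d = weighted_gram X d'.
Proof.
move=> eq_d; rewrite /weighted_gram; congr (_ *m diag_mx _ *m _).
by apply/rowP => j; rewrite !mxE.
Qed.

(* Selecting n columns S of X by 0/1 weights gives the Gram matrix of the
   square submatrix X_S, whose determinant is nonnegative. *)
Lemma det_column_gram_ge0 (C : numClosedFieldType) n m (X : 'M[C]_(n, m))
    (S : {set 'I_m}) :
  #|S| = n -> 0 <= \det (weighted_gram X (fun j => (j \in S)%:R)).
Proof.
move=> cardS; subst n.
pose Z : 'M[C]_#|S| := \matrix_(i, k) X i (enum_val (A := S) k).
suff -> : weighted_gram X (fun j => (j \in S)%:R) = Z *m ctrmx Z.
  exact: det_gram_square_ge0.
apply/matrixP => i j; rewrite !mxE.
rewrite (eq_bigr (fun k => if k \in S then X i k * Num.conj (X j k) else 0));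
  last by move=> k _; rewrite mul_mx_diag !mxE; case: (k \in S);
    rewrite ?mulr1 ?mulr0 ?mul0r.
rewrite -big_mkcond /= (big_enum_val (A := mem S)) /=.
by apply: eq_bigr => k _; rewrite !mxE.
Qed.

Section WeightedGram.
Variables (C : numClosedFieldType) (n m : nat) (X : 'M[C]_(n, m)).

Definition binet_term (f : {ffun 'I_n -> 'I_m}) : C :=
  (\prod_i X i (f i)) * \det (\matrix_(i, j) (ctrmx X) (f i) j).

Definition column_gram (S : {set 'I_m}) : C :=
  \det (weighted_gram X (fun j => (j \in S)%:R)).

Lemma det_weighted_gram_ffun (d : 'I_m -> C) :
  \det (weighted_gram X d) =
  \sum_(f : {ffun 'I_n -> 'I_m}) (\prod_i d (f i)) * binet_term f.
Proof.
rewrite /weighted_gram det_mulmx_ffun; apply: eq_bigr => f _.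
rewrite /binet_term mulrA -big_split /=; congr (_ * _).
by apply: eq_bigr => i _; rewrite mul_mx_diag !mxE mulrC.
Qed.

(* A non-injective f selects two equal rows of X^H. *)
Lemma binet_term_noninj (f : {ffun 'I_n -> 'I_m}) :
  ~~ injectiveb f -> binet_term f = 0.
Proof.
move/injectivePn => [i1 [i2 ne e]].
rewrite /binet_term (determinant_alternate ne) ?mulr0 // => j.
by rewrite !mxE e.
Qed.

Lemma prod_indicator (I : finType) (b : I -> bool) :
  \prod_i ((b i)%:R : C) = ([forall i, b i])%:R.
Proof.
case: forallP => [allb|/forallP/forallPn [i nbi]].
  by apply: big1 => i _; rewrite allb.
by rewrite (bigD1 i) //= (negPf nbi) mul0r.
Qed.

Lemma column_gram_ffun (S : {set 'I_m}) :
  column_gram S = \sum_(f : {ffun 'I_n -> 'I_m} | [forall i, f i \in S]) binet_term f.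
Proof.
rewrite /column_gram det_weighted_gram_ffun [RHS]big_mkcond /=.
apply: eq_bigr => f _; rewrite prod_indicator.
by case: forallP; rewrite ?mul1r ?mul0r.
Qed.

(* An injective f contributes exactly to the set S = f([n]). *)
Lemma image_set_eq (f : {ffun 'I_n -> 'I_m}) (S : {set 'I_m}) :
  injective f -> (#|S| == n) && [forall i, f i \in S] = (S == [set f i | i : 'I_n]).
Proof.
move=> inj_f; have card_im : #|[set f i | i : 'I_n]| = n.
  by rewrite card_imset // card_ord.
rewrite [S == _]eq_sym eqEcard card_im.
have -> : ([set f i | i : 'I_n] \subset S) = [forall i, f i \in S].
  apply/subsetP/forallP => [imS i|fS _ /imsetP [i _ ->] //].
  by apply: imS; apply/imsetP; exists i.
case: forallP => fS /=; last by rewrite andbF.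
rewrite andbT; apply/eqP/idP => [<-//|leSn].
apply/eqP; rewrite eqn_leq leSn -card_im; apply: subset_leq_card.
by apply/subsetP => _ /imsetP [i _ ->].
Qed.

(* Weighted Cauchy-Binet formula: group the maps f by their image S. *)
Lemma det_weighted_gram_sets (d : 'I_m -> C) :
  \det (weighted_gram X d) =
  \sum_(S : {set 'I_m} | #|S| == n) (\prod_(j in S) d j) * column_gram S.
Proof.
under [RHS]eq_bigr => S _ do rewrite column_gram_ffun big_distrr.
rewrite det_weighted_gram_ffun /= (exchange_big_dep predT) //=.
apply: eq_bigr => f _.
have [/injectiveP inj_f|ninj] := boolP (injectiveb f); last first.
  by rewrite binet_term_noninj // mulr0 big1 // => S _; rewrite mulr0.
rewrite (eq_bigl _ _ (fun S => image_set_eq S inj_f)) big_pred1_eq.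
rewrite big_imset /=; last by move=> x y _ _; apply: inj_f.
by congr (_ * _); apply: eq_bigl => i; rewrite inE.
Qed.

Lemma det_gram_sets :
  \det (X *m ctrmx X) = \sum_(S : {set 'I_m} | #|S| == n) column_gram S.
Proof.
have -> : X *m ctrmx X = weighted_gram X (fun=> 1).
  rewrite /weighted_gram (_ : \row_j _ = const_mx 1) ?diag_const_mx ?mulmx1 //.
  by apply/rowP => j; rewrite !mxE.
by rewrite det_weighted_gram_sets; apply: eq_bigr => S _; rewrite big1 ?mul1r.
Qed.

Lemma det_gram_ge0 : 0 <= \det (X *m ctrmx X).
Proof.
rewrite det_gram_sets; apply: sumr_ge0 => S /eqP cardS.
exact: det_column_gram_ge0.
Qed.

(* Weights in [lo, hi] with lo >= 0 scale the Gram determinant by a factor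
   in [lo^n, hi^n]: each set term of the Cauchy-Binet sum is so scaled. *)
Lemma det_weighted_gram_bounds (d : 'I_m -> C) (lo hi : C) :
  0 <= lo -> (forall j, lo <= d j <= hi) ->
  lo ^+ n * \det (X *m ctrmx X) <= \det (weighted_gram X d) <=
  hi ^+ n * \det (X *m ctrmx X).
Proof.
move=> lo_ge0 d_in; rewrite det_gram_sets det_weighted_gram_sets !mulr_sumr.
apply/andP; split; apply: ler_sum => S /eqP cardS;
  rewrite ler_wpM2r ?det_column_gram_ge0 // -cardS -prodr_const;
  apply: ler_prod => j _; have /andP[lo_d d_hi] := d_in j.
  by rewrite lo_ge0 lo_d.
by rewrite d_hi (le_trans lo_ge0 lo_d).
Qed.

End WeightedGram.

(* A value sandwiched between lo^n D and hi^n D (with 0 <= lo <= hi, 0 <= D)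
   is e^n D for some e in [lo, hi]: take e the n-th root of the ratio. *)
Lemma pow_mean_between (C : numClosedFieldType) n (lo hi D E : C) :
  0 <= lo -> lo <= hi -> 0 <= D -> lo ^+ n * D <= E <= hi ^+ n * D ->
  exists2 e, lo <= e <= hi & E = e ^+ n * D.
Proof.
move=> lo_ge0 lo_hi D_ge0 /andP[E_lo E_hi].
have lo_in : lo <= lo <= hi by rewrite lexx lo_hi.
have [D0|D_neq0] := eqVneq D 0.
  exists lo => //; apply/eqP; rewrite eq_le.
  by move: E_lo E_hi; rewrite D0 !mulr0 => -> ->.
case: n E_lo E_hi => [|n] E_lo E_hi.
  by exists lo => //; apply/eqP; rewrite eq_le E_hi E_lo.
have D_gt0 : 0 < D by rewrite lt_def D_neq0.
have hi_ge0 : 0 <= hi := le_trans lo_ge0 lo_hi.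
have r_lo : lo ^+ n.+1 <= E / D by rewrite ler_pdivlMr.
have r_hi : E / D <= hi ^+ n.+1 by rewrite ler_pdivrMr.
have r_ge0 : 0 <= E / D := le_trans (exprn_ge0 _ lo_ge0) r_lo.
exists (n.+1.-root (E / D)); last by rewrite rootCK // divfK.
rewrite -[lo](exprCK (ltn0Sn n) lo_ge0) -[hi](exprCK (ltn0Sn n) hi_ge0).
by rewrite !ler_rootC // ?r_lo ?r_hi // nnegrE ?exprn_ge0.
Qed.

Lemma real_family_min (C : numClosedFieldType) (I : finType) (x : I -> C) (i0 : I) :
  (forall i, x i \is Num.real) -> exists i, forall j, x i <= x j.
Proof.
move=> x_real.
suff [i min_i] : exists i, forall j, j \in enum I -> x i <= x j.
  by exists i => j; apply: min_i; rewrite mem_enum.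
elim: (enum I) => [|a s [i min_i]]; first by exists i0.
have [xa_le|xi_le] := orP (real_leVge (x_real a) (x_real i)).
  exists a => j; rewrite inE => /orP [/eqP -> // | js].
  exact: le_trans xa_le (min_i j js).
exists i => j; rewrite inE => /orP [/eqP -> // | js]; exact: min_i.
Qed.

Lemma real_family_max (C : numClosedFieldType) (I : finType) (x : I -> C) (i0 : I) :
  (forall i, x i \is Num.real) -> exists i, forall j, x j <= x i.
Proof.
move=> x_real; have [|i min_i] := @real_family_min C I (fun i => - x i) i0.
  by move=> i; rewrite realN.
by exists i => j; rewrite -lerN2.
Qed.

Lemma det_weighted_gram_mean (C : numClosedFieldType) n m (X : 'M[C]_(n, m))
    (d : 'I_m -> C) :
  (n <= m)%N -> (forall j, 0 <= d j) ->
  exists eps : 'I_n -> C,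
    (forall k, in_min_max d (eps k)) /\
    \det (weighted_gram X d) = (\prod_k eps k) * \det (X *m ctrmx X).
Proof.
case: n X => [|n] X le_nm d_ge0.
  by exists (fun=> 0); split => [[] //|]; rewrite !det_mx00 big_ord0 mul1r.
pose i0 : 'I_m := Ordinal (leq_trans (ltn0Sn n) le_nm).
have d_real j : d j \is Num.real by apply: ger0_real.
have [imin min_d] := real_family_min i0 d_real.
have [imax max_d] := real_family_max i0 d_real.
have d_in j : d imin <= d j <= d imax by rewrite min_d max_d.
have [e /andP[lo_e e_hi] ->] := pow_mean_between (d_ge0 imin) (min_d imax)
  (det_gram_ge0 X) (det_weighted_gram_bounds X (d_ge0 imin) d_in).
exists (fun=> e); split; first by move=> k; split; [exists imin | exists imax].
by rewrite prodr_const card_ord.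
Qed.

Section HadamardRankOne.
Variable C : numClosedFieldType.

Lemma hadamard_rank_one m n (g : 'cV[C]_m) (h : 'cV[C]_n) (Theta : 'M[C]_(m, n)) :
  hadamard (g *m h^T) Theta =
  diag_mx (\row_i g i 0) *m Theta *m diag_mx (\row_j h j 0).
Proof.
apply/matrixP => i j.
by rewrite mul_mx_diag mul_diag_mx !mxE big_ord1 !mxE mulrAC.
Qed.

Lemma ctrmx_scaled m n (X : 'M[C]_(m, n)) (a : 'I_m -> C) (b : 'I_n -> C) :
  ctrmx (diag_mx (\row_i a i) *m X *m diag_mx (\row_j b j)) =
  diag_mx (\row_j Num.conj (b j)) *m ctrmx X *m diag_mx (\row_i Num.conj (a i)).
Proof. by rewrite !ctrmx_mul !ctrmx_diag mulmxA. Qed.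

Lemma det_gram_scaled m n (X : 'M[C]_(m, n)) (a : 'I_m -> C) (b : 'I_n -> C) :
  let Y := diag_mx (\row_i a i) *m X *m diag_mx (\row_j b j) in
  \det (Y *m ctrmx Y) =
  (\prod_i `|a i| ^+ 2) * \det (weighted_gram X (fun j => `|b j| ^+ 2)).
Proof.
move=> Y.
have gramY : Y *m ctrmx Y = diag_mx (\row_i a i) *m
    weighted_gram X (fun j => `|b j| ^+ 2) *m diag_mx (\row_i Num.conj (a i)).
  rewrite /Y ctrmx_scaled /weighted_gram !mulmxA.
  rewrite -[_ *m diag_mx _ *m diag_mx _]mulmxA mulmx_diag.
  by congr (_ *m diag_mx _ *m _ *m _); apply/rowP => j; rewrite !mxE normCK.
rewrite gramY !det_mulmx !det_diag mulrAC -big_split /=; congr (_ * _).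
by apply: eq_bigr => i _; rewrite !mxE normCK.
Qed.

End HadamardRankOne.

Theorem theorem2 (C : numClosedFieldType) (MR MT : nat)
  (g : 'cV[C]_MR) (h : 'cV[C]_MT) (Theta : 'M[C]_(MR, MT))
  (hTheta : \rank Theta = minn MR MT) :
  let H := g *m h^T in
  let Hh := hadamard H Theta in
  ((MR <= MT)%N ->
    exists eps : 'I_MR -> C,
      (forall k, in_min_max (fun i : 'I_MT => `|h i 0| ^+ 2) (eps k)) /\
      \det (Hh *m ctrmx Hh) =
        (\prod_(i < MR) (`|g i 0| ^+ 2 * eps i)) * \det (Theta *m ctrmx Theta)) /\
  ((MT <= MR)%N ->
    exists nu : 'I_MT -> C,
      (forall k, in_min_max (fun i : 'I_MR => `|g i 0| ^+ 2) (nu k)) /\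
      \det (ctrmx Hh *m Hh) =
        (\prod_(i < MT) (`|h i 0| ^+ 2 * nu i)) * \det (ctrmx Theta *m Theta)).
Proof.
move=> H Hh; rewrite /Hh /H hadamard_rank_one.
split=> [le_RT | le_TR].
  have [eps [eps_in det_eq]] :=
    det_weighted_gram_mean Theta le_RT (fun j => exprn_ge0 2 (normr_ge0 (h j 0))).
  by exists eps; split => //; rewrite det_gram_scaled det_eq mulrA [in RHS]big_split.
(* Hh^H Hh is the Gram matrix of Hh^H = D_{conj h} Theta^H D_{conj g}. *)
set Y := diag_mx _ *m Theta *m _.
rewrite -{2}[Y]ctrmxK /Y ctrmx_scaled.
have [nu [nu_in det_eq]] := det_weighted_gram_mean (ctrmx Theta) le_TR
  (fun i => exprn_ge0 2 (normr_ge0 (g i 0))).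
exists nu; split => //; rewrite det_gram_scaled.
rewrite (eq_weighted_gram _ (fun i => congr1 (fun x : C => x ^+ 2) (norm_conjC (g i 0)))).
rewrite det_eq ctrmxK.
by rewrite mulrA [in RHS]big_split; under eq_bigr do rewrite norm_conjC.
Qed.
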